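(* Let $P=\sum_{|\nu|\le d}a_\nu X^\nu\in\mathbb{C}[X_1,\dots,X_n]_{int}$ with $a_\nu\in{}^*\mathbb{C}$ and $d\in{}^*\mathbb{N}$ infinite. Then $P$ is absolutely infinitesimal if and only if $a_0$ is infinitesimal and $|a_\nu|^{1/|\nu|}\in{}^i\mathbb{C}$ for every $\nu\in{}^*\mathbb{N}^n\setminus\{0\}$ with $|\nu|\le d$.
   Context: ${}^*\mathbb{C}$ is an ultrapower of $\mathbb{C}$ by a nonprincipal ultrafilter; ${}^b\mathbb{C}$ (resp. ${}^i\mathbb{C}$) denotes the elements $z$ with $|z|\le r$ for some standard real $r$ (resp. $|z|<r$ for every standard real $r>0$). For finite $n$, $\mathbb{C}[X_1,\dots,X_n]_{int}$ is the ultrapower of $\mathbb{C}[X_1,\dots,X_n]$ (internal polynomials), written uniquely as $\sum_{|\nu|\le d}a_\nu X^\nu$ over $\nu\in{}^*\mathbb{N}^n$ and viewed as internal functions ${}^*\mathbb{C}^n\to{}^*\mathbb{C}$. $|P|:=\sum_{|\nu|\le d}|a_\nu|X^\nu$. $P$ is absolutely infinitesimal if $|P|({}^b\mathbb{C}^n)\subset{}^i\mathbb{C}$. *)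

From mathcomp Require Import all_boot all_order all_algebra complex.
From mathcomp Require Import all_classical all_reals all_analysis.
Set Implicit Arguments. Unset Strict Implicit. Unset Printing Implicit Defensive.
Import Order.TTheory GRing.Theory Num.Theory.
Local Open Scope classical_set_scope.
Local Open Scope ring_scope.
Local Open Scope complex_scope.

(* The ultrapower *C = C^N / U is handled through representatives:
   a hypercomplex number is a sequence nat -> R[i], a hypernatural is a
   sequence nat -> nat, and an internal statement holds iff it holds
   U-almost everywhere.  All notions below are invariant under U-a.e.
   equality of representatives. *)

Definition nonprincipal_ultrafilter (U : set (set nat)) : Prop :=
  [/\ U setT /\ ~ U set0,
      (forall A B, U A -> U B -> U (A `&` B)),
      (forall A B, A `<=` B -> U A -> U B),
      (forall A, U A \/ U (~` A)) &
      (forall m : nat, ~ U [set m])].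

Definition ae (U : set (set nat)) (P : nat -> Prop) : Prop := U [set k | P k].

Definition hbounded (R : realType) (U : set (set nat)) (z : nat -> R[i]) : Prop :=
  exists r : R, ae U (fun k => `|z k| <= r%:C).

Definition hinfinitesimal (R : realType) (U : set (set nat)) (z : nat -> R[i]) : Prop :=
  forall r : R, 0 < r -> ae U (fun k => `|z k| < r%:C).

Definition hinfinite (U : set (set nat)) (d : nat -> nat) : Prop :=
  forall m : nat, ae U (fun k => (m < d k)%N).

Definition mdeg (n : nat) (nu : 'I_n -> nat) : nat := (\sum_(i < n) nu i)%N.

Definition abs_poly_eval (R : realType) (n : nat) (a : ('I_n -> nat) -> R[i])
  (d : nat) (w : 'I_n -> R[i]) : R[i] :=
  \sum_(nu : {ffun 'I_n -> 'I_d.+1} | (mdeg (fun i => nat_of_ord (nu i)) <= d)%N)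
     `|a (fun i => nat_of_ord (nu i))| * \prod_(i < n) w i ^+ nu i.

(* An internal polynomial P = sum_{|nu| <= d} a_nu X^nu is represented by
   a : nat -> (('I_n -> nat) -> R[i]) (coefficients, a k nu = k-th component
   of a_nu) and d : nat -> nat (the hypernatural degree bound). *)
Definition abs_infinitesimal (R : realType) (U : set (set nat)) (n : nat)
  (a : nat -> ('I_n -> nat) -> R[i]) (d : nat -> nat) : Prop :=
  forall z : nat -> 'I_n -> R[i],
    (forall i : 'I_n, hbounded U (fun k => z k i)) ->
    hinfinitesimal U (fun k => abs_poly_eval (a k) (d k) (z k)).

From mathcomp Require Import all_boot all_order all_algebra complex.
From mathcomp Require Import all_classical all_reals all_analysis.
From mathcomp Require Import lra.
Import Order.TTheory GRing.Theory Num.Theory.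
Local Open Scope ring_scope.
Local Open Scope complex_scope.
Set Implicit Arguments. Unset Strict Implicit.

(* Write rho_k for the largest |a_nu|^(1/|nu|) over 0 < |nu| <= d_k, so that
   |a_nu| <= rho^|nu|.  If P is absolutely infinitesimal, evaluating |P| at
   the constant point 1/delta gives |a_nu| delta^-|nu| < 1, i.e. each root is
   below delta, and evaluating at 0 gives |a_0| infinitesimal.  Conversely
   rho is attained at an internal multi-index, so rho is infinitesimal; for
   |z_i| <= r the sum over nu <> 0 of (rho r)^|nu| is at most
   (1 + 2 rho r)^n - 1 <= 3^n 2 rho r, hence |P|(z) <= |a_0| + 3^n 2 rho r
   is infinitesimal. *)

Section Ultrafilter.
Variable U : set (set nat).
Hypothesis hU : nonprincipal_ultrafilter U.

Lemma aeT (P : nat -> Prop) : (forall k, P k) -> ae U P.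
Proof. by case: hU => [[UT _] _ Um _ _] H; apply: Um UT => k _; exact: H. Qed.

Lemma ae_mono (P Q : nat -> Prop) : (forall k, P k -> Q k) -> ae U P -> ae U Q.
Proof. by case: hU => [_ _ Um _ _] H; apply: Um => k; exact: H. Qed.

Lemma aeI (P Q : nat -> Prop) : ae U P -> ae U Q -> ae U (fun k => P k /\ Q k).
Proof. by case: hU => [_ UI _ _ _] HP HQ; exact: UI _ _ HP HQ. Qed.

Lemma ae_not (P : nat -> Prop) : ~ ae U P -> ae U (fun k => ~ P k).
Proof. by case: hU => [_ _ _ Uc _] H; case: (Uc P). Qed.

Lemma ae_forall_ord (m : nat) (P : 'I_m -> nat -> Prop) :
  (forall i, ae U (P i)) -> ae U (fun k => forall i, P i k).
Proof.
move=> H; suff /(_ m) Hm : forall l, ae U (fun k => forall i : 'I_m, (i < l)%N -> P i k).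
  by apply: ae_mono Hm => k Hk i; exact: Hk.
elim=> [|l IH]; first exact: aeT.
have [lm | ml] := ltnP l m; last first.
  by apply: ae_mono IH => k Hk i _; apply: Hk; exact: leq_trans (ltn_ord i) ml.
apply: ae_mono (aeI IH (H (Ordinal lm))) => k [Hl Hm] i.
rewrite ltnS leq_eqVlt => /orP[/eqP iE | il]; last exact: Hl.
by have -> : i = Ordinal lm by exact: val_inj.
Qed.

End Ultrafilter.

Section RealEstimates.
Variable R : realType.

Lemma normc_ge0 (z : R[i]) : 0 <= Normc.normc z.
Proof. by rewrite -ler0c; exact: normr_ge0 z. Qed.

Lemma powR_recip_exprK (x : R) (m : nat) :
  0 <= x -> (0 < m)%N -> (x `^ (1 / m%:R)) ^+ m = x.
Proof.
move=> x0 m0; rewrite -powR_mulrn ?powR_ge0 // -powRrM mul1r mulVf ?powRr1 //.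
by rewrite pnatr_eq0 -lt0n.
Qed.

Lemma geometric_sum_le (x : R) (m : nat) :
  0 <= x -> x <= 1 / 2 -> \sum_(j < m) x ^+ j <= 1 + 2 * x.
Proof.
move=> x0 x1; elim: m => [|m IH]; first by rewrite big_ord0; lra.
rewrite big_ord_recl expr0.
under eq_bigr => j _ do rewrite /bump /= exprS.
rewrite -mulr_sumr.
have : x * \sum_(j < m) x ^+ j <= x * (1 + 2 * x) by rewrite ler_wpM2l.
nra.
Qed.

Lemma expr1D_le (y : R) (m : nat) :
  0 <= y -> y <= 1 -> (1 + y) ^+ m <= 1 + 3 ^+ m * y.
Proof.
move=> y0 y1; elim: m => [|m IH]; first by rewrite !expr0; lra.
rewrite !exprS.
have h3 : 1 <= 3 ^+ m :> R by apply: exprn_ege1; lra.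
have : 3 ^+ m * (y * y) <= 3 ^+ m * y.
  by rewrite ler_wpM2l ?(le_trans ler01 h3) //; nra.
have : (1 + y) * (1 + y) ^+ m <= (1 + y) * (1 + 3 ^+ m * y) by rewrite ler_wpM2l; lra.
nra.
Qed.

End RealEstimates.

Section AbsPolyEval.
Variables (R : realType) (n : nat).
Implicit Types (a : ('I_n -> nat) -> R[i]) (d : nat) (nu : 'I_n -> nat).

Definition mindex d (f : {ffun 'I_n -> 'I_d.+1}) : 'I_n -> nat := fun i => f i.

Definition bounded_mindex d nu : {ffun 'I_n -> 'I_d.+1} := [ffun i => inord (nu i)].

Lemma leq_mdeg nu i : (nu i <= mdeg nu)%N.
Proof. by rewrite /mdeg (bigD1 i) //= leq_addr. Qed.

Lemma mdeg0 : mdeg (fun _ : 'I_n => 0%N) = 0%N.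
Proof. by rewrite /mdeg big1. Qed.

Lemma mdeg_eq0 nu : mdeg nu = 0%N -> nu = fun _ => 0%N.
Proof. by move=> H; apply: funext => i; apply/eqP; rewrite -leqn0 -H leq_mdeg. Qed.

Lemma bounded_mindexK d nu : (mdeg nu <= d)%N -> mindex (bounded_mindex d nu) = nu.
Proof.
move=> nud; apply: funext => i; rewrite /mindex ffunE inordK //.
by rewrite ltnS (leq_trans (leq_mdeg nu i)).
Qed.

Lemma mindex0 d : mindex [ffun => ord0 : 'I_d.+1] = fun _ => 0%N.
Proof. by apply: funext => i; rewrite /mindex ffunE. Qed.

Lemma mdeg_mindex_eq0 d (f : {ffun 'I_n -> 'I_d.+1}) :
  (mdeg (mindex f) == 0%N) = (f == [ffun => ord0]).
Proof.
apply/eqP/eqP => [/mdeg_eq0 f0 | ->]; last by rewrite mindex0 mdeg0.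
by apply/ffunP => i; apply: val_inj; rewrite ffunE /= -[val _]/(mindex f i) f0.
Qed.

Definition coef_root a nu : R := Normc.normc (a nu) `^ (1 / (mdeg nu)%:R).

Lemma coef_rootK a nu : (0 < mdeg nu)%N -> coef_root a nu ^+ mdeg nu = Normc.normc (a nu).
Proof. by move=> nu0; rewrite powR_recip_exprK ?normc_ge0. Qed.

(* [0] when no multi-index has [0 < |nu| <= d], e.g. for [n = 0] or [d = 0]. *)
Definition coef_radius a d : R :=
  \big[Num.max/0]_(f : {ffun 'I_n -> 'I_d.+1} | (0 < mdeg (mindex f) <= d)%N)
     coef_root a (mindex f).

Lemma coef_le_radius a d nu :
  (0 < mdeg nu <= d)%N -> Normc.normc (a nu) <= coef_radius a d ^+ mdeg nu.
Proof.
move=> /andP[nu0 nud]; rewrite -coef_rootK //.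
apply: lerXn2r; rewrite ?nnegrE ?powR_ge0 //.
  by apply: bigmax_ge_id.
rewrite -[in leLHS](bounded_mindexK nud).
by apply: le_bigmax_cond; rewrite bounded_mindexK // nu0.
Qed.

Lemma coef_radius_ge0 a d : 0 <= coef_radius a d.
Proof. exact: bigmax_ge_id. Qed.

Lemma coef_radius_attained a d : exists nu,
  [/\ (mdeg nu <= d)%N, nu = (fun _ => 0%N) -> coef_radius a d = 0
    & coef_radius a d <= coef_root a nu].
Proof.
set P := fun f : {ffun 'I_n -> 'I_d.+1} => (0 < mdeg (mindex f) <= d)%N.
have [f Pf | none] := pickP P; last first.
  exists (fun _ => 0%N); rewrite /coef_radius big_pred0 ?mdeg0 ?powR_ge0 //.
have [g] := eq_bigmax f P (coef_root a \o @mindex d) Pf (fun h _ => powR_ge0 _ _).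
rewrite unfold_in => /andP[g0 gd] radE; exists (mindex g); split => // [g00|].
  by move: g0; rewrite g00 mdeg0.
by rewrite /coef_radius radE.
Qed.

Lemma abs_poly_term_ge0 a nu (y : R) : 0 <= y -> 0 <= `|a nu| * \prod_(i < n) y%:C ^+ nu i.
Proof. by move=> y0; rewrite mulr_ge0 // prodr_ge0 // => i _; rewrite exprn_ge0 ?ler0c. Qed.

Lemma abs_poly_eval_ge0 a d (y : R) : 0 <= y -> 0 <= abs_poly_eval a d (fun _ => y%:C).
Proof. by move=> y0; apply: sumr_ge0 => f _; exact: abs_poly_term_ge0. Qed.

Lemma coef_le_abs_poly_eval a d nu (y : R) : 0 <= y -> (mdeg nu <= d)%N ->
  (Normc.normc (a nu) * y ^+ mdeg nu)%:C <= `|abs_poly_eval a d (fun _ => y%:C)|.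
Proof.
move=> y0 nud; have nuK := bounded_mindexK nud; rewrite /mindex in nuK.
rewrite ger0_norm ?abs_poly_eval_ge0 //.
rewrite /abs_poly_eval (bigD1 (bounded_mindex d nu)) /=; last by rewrite nuK.
rewrite -[leLHS]addr0 lerD //; last by apply: sumr_ge0 => f _; exact: abs_poly_term_ge0.
rewrite nuK prodrXr rmorphM rmorphXn /=.
by rewrite -[\sum_(i < n) _]/(mdeg (fun i => nat_of_ord (bounded_mindex d nu i))) nuK.
Qed.

Lemma sum_expr_mdeg d (x : R) :
  \sum_(f : {ffun 'I_n -> 'I_d.+1}) x ^+ mdeg (mindex f) = (\sum_(j < d.+1) x ^+ j) ^+ n.
Proof.
rewrite -[n in RHS]card_ord -prodr_const bigA_distr_bigA.
by apply: eq_bigr => f _; rewrite prodrXr.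
Qed.

Lemma sum_nonconst_expr_mdeg_le d (x : R) : 0 <= x -> x <= 1 / 2 ->
  \sum_(f : {ffun 'I_n -> 'I_d.+1} | (0 < mdeg (mindex f) <= d)%N) x ^+ mdeg (mindex f)
  <= 3 ^+ n * (2 * x).
Proof.
move=> x0 x1; set S := \sum_(j < d.+1) x ^+ j.
have S1 : 1 <= S.
  rewrite /S big_ord_recl expr0 -[leLHS]addr0 lerD //.
  by apply: sumr_ge0 => j _; rewrite exprn_ge0.
have Sn : S ^+ n <= 1 + 3 ^+ n * (2 * x).
  apply: le_trans (expr1D_le n _ _); try lra.
  by apply: lerXn2r; rewrite ?nnegrE ?(le_trans ler01 S1) ?geometric_sum_le //; lra.
have := sum_expr_mdeg d x; rewrite -/S (bigD1 [ffun => ord0]) //= mindex0 mdeg0 expr0.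
have : \sum_(f : {ffun 'I_n -> 'I_d.+1} | (0 < mdeg (mindex f) <= d)%N) x ^+ mdeg (mindex f)
    <= \sum_(f : {ffun 'I_n -> 'I_d.+1} | f != [ffun => ord0]) x ^+ mdeg (mindex f).
  rewrite big_mkcond [X in _ <= X]big_mkcond /=; apply: ler_sum => f _.
  rewrite -mdeg_mindex_eq0 -lt0n.
  by case: (0 < mdeg (mindex f))%N => //=; case: (mdeg (mindex f) <= d)%N; rewrite ?exprn_ge0.
lra.
Qed.

Lemma abs_poly_eval_le a d (z : 'I_n -> R[i]) (r c : R) :
  0 <= r -> 0 <= c -> c * r <= 1 / 2 ->
  (forall nu, (0 < mdeg nu <= d)%N -> Normc.normc (a nu) <= c ^+ mdeg nu) ->
  (forall i, `|z i| <= r%:C) ->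
  `|abs_poly_eval a d z| <= (Normc.normc (a (fun _ => 0%N)) + 3 ^+ n * (2 * (c * r)))%:C.
Proof.
move=> r0 c0 cr ac zr; apply: le_trans (ler_norm_sum _ _ _) _.
apply: (@le_trans _ _ ((\sum_(f : {ffun 'I_n -> 'I_d.+1} | (mdeg (mindex f) <= d)%N)
   Normc.normc (a (mindex f)) * r ^+ mdeg (mindex f))%:C)).
  rewrite rmorph_sum; apply: ler_sum => f _.
  rewrite normrM normr_id normr_prod rmorphM /= ler_wpM2l //.
  rewrite rmorphXn /= /mdeg -prodrXr; apply: ler_prod => i _.
  by rewrite normr_ge0 normrX /= lerXn2r ?nnegrE ?ler0c ?normc_ge0 ?zr.
rewrite lecR (bigD1 [ffun => ord0]) /= ?mindex0 ?mdeg0 // expr0 mulr1 lerD2l.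
apply: le_trans (sum_nonconst_expr_mdeg_le d (mulr_ge0 c0 r0) cr).
rewrite (eq_bigl (fun f => (0 < mdeg (mindex f) <= d)%N)) => [|f]; last first.
  by rewrite lt0n mdeg_mindex_eq0 andbC.
apply: ler_sum => f nonconst_f; rewrite exprMn ler_wpM2r ?exprn_ge0 //.
exact: ac.
Qed.

End AbsPolyEval.

Section Transfer.
Variables (R : realType) (U : set (set nat)) (n : nat).
Hypothesis hU : nonprincipal_ultrafilter U.
Variables (a : nat -> ('I_n -> nat) -> R[i]) (d : nat -> nat).

Lemma hbounded_uniform (z : nat -> 'I_n -> R[i]) :
  (forall i, hbounded U (fun k => z k i)) ->
  exists2 r : R, 0 < r & ae U (fun k => forall i, `|z k i| <= r%:C).
Proof.
move=> /choice[rs Hrs]; exists (1 + \sum_(i < n) `|rs i|).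
  by rewrite ltr_pwDl // sumr_ge0.
have := ae_forall_ord hU Hrs; apply: (ae_mono hU) => k Hk i; apply: le_trans (Hk i) _.
rewrite lecR (le_trans (ler_norm _)) // (bigD1 i) //= addrCA ler_wpDr //.
by rewrite addr_ge0 // sumr_ge0.
Qed.

Lemma abs_infinitesimal_const_coef :
  abs_infinitesimal U a d -> hinfinitesimal U (fun k => a k (fun _ => 0%N)).
Proof.
move=> Pinf r r0.
have zb i : hbounded U (fun k => (fun _ : 'I_n => (0 : R)%:C) i).
  by exists 0; apply: (aeT hU) => k; rewrite normr0.
apply: (ae_mono hU) (Pinf _ zb r r0) => k; apply: le_lt_trans.
have := @coef_le_abs_poly_eval _ _ (a k) (d k) (fun _ => 0%N) _ (lexx 0).
by rewrite mdeg0 expr0 mulr1 => /(_ (leq0n _)).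
Qed.

Lemma abs_infinitesimal_coef_root (nu : nat -> 'I_n -> nat) :
  abs_infinitesimal U a d ->
  ~ ae U (fun k => nu k = (fun _ => 0%N)) ->
  ae U (fun k => (mdeg (nu k) <= d k)%N) ->
  hinfinitesimal U (fun k => (coef_root (a k) (nu k))%:C).
Proof.
move=> Pinf nu0 nud delta delta0.
have y0 : 0 <= delta^-1 by rewrite invr_ge0 ltW.
have zb i : hbounded U (fun k => (fun _ : 'I_n => delta^-1%:C) i).
  by exists delta^-1; apply: (aeT hU) => k; rewrite ger0_norm ?ler0c.
have := aeI hU (Pinf _ zb 1 ltr01) (aeI hU (ae_not hU nu0) nud).
apply: (ae_mono hU) => k [Pk [nuk0 nukd]].
have m0 : (0 < mdeg (nu k))%N.
  by rewrite lt0n; apply: contra_notN nuk0 => /eqP /mdeg_eq0.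
have := le_lt_trans (coef_le_abs_poly_eval (a k) y0 nukd) Pk.
rewrite ltcR -(coef_rootK _ m0) -exprMn ger0_norm ?ler0c ?powR_ge0 // ltcR.
move=> lt1; have : coef_root (a k) (nu k) / delta < 1.
  by rewrite ltNge; apply: contraTN lt1 => ge1; rewrite -leNgt exprn_ege1.
by rewrite ltr_pdivrMr // mul1r.
Qed.

Lemma coef_radius_infinitesimal :
  (forall nu : nat -> 'I_n -> nat,
     ~ ae U (fun k => nu k = (fun _ => 0%N)) ->
     ae U (fun k => (mdeg (nu k) <= d k)%N) ->
     hinfinitesimal U (fun k => (coef_root (a k) (nu k))%:C)) ->
  hinfinitesimal U (fun k => (coef_radius (a k) (d k))%:C).
Proof.
move=> roots r r0.
have [mu Hmu] := choice (fun k => coef_radius_attained (a k) (d k)).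
case: (pselect (ae U (fun k => mu k = (fun _ => 0%N)))) => [mu0 | mu0].
  apply: (ae_mono hU) mu0 => k muk0; have [_ /(_ muk0) -> _] := Hmu k.
  by rewrite normr0 ltcR.
have mud : ae U (fun k => (mdeg (mu k) <= d k)%N) by apply: (aeT hU) => k; case: (Hmu k).
apply: (ae_mono hU) (roots mu mu0 mud r r0) => k.
have [_ _ le_root] := Hmu k.
rewrite !ger0_norm ?ler0c ?powR_ge0 ?coef_radius_ge0 // !ltcR; exact: le_lt_trans.
Qed.

Lemma abs_infinitesimal_of_coef :
  hinfinitesimal U (fun k => a k (fun _ => 0%N)) ->
  hinfinitesimal U (fun k => (coef_radius (a k) (d k))%:C) ->
  abs_infinitesimal U a d.
Proof.
move=> a0 rad z zb eps eps0.
have [r r0 zr] := hbounded_uniform zb.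
set K : R := 3 ^+ n; have K0 : 0 < K by rewrite exprn_gt0.
set delta := Num.min (eps / (4 * K * r)) (1 / (2 * r)).
have delta0 : 0 < delta by rewrite lt_min !divr_gt0 ?mulr_gt0.
have := aeI hU (rad _ delta0) (aeI hU (a0 (eps / 2) (divr_gt0 eps0 (ltr0Sn _ 1))) zr).
apply: (ae_mono hU) => k [radk [a0k zk]].
have c0 := coef_radius_ge0 (a k) (d k).
rewrite ger0_norm ?ler0c // ltcR lt_min in radk.
case/andP: radk; rewrite !ltr_pdivlMr ?mulr_gt0 // => rad1 rad2.
have cr : coef_radius (a k) (d k) * r <= 1 / 2 by nra.
apply: le_lt_trans (abs_poly_eval_le (ltW r0) c0 cr (@coef_le_radius _ _ _ _) zk) _.
have a0k' : Normc.normc (a k (fun _ => 0%N)) < eps / 2 by rewrite -ltcR.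
rewrite ltcR -/K; nra.
Qed.

End Transfer.

Theorem proposition1p4p3 (R : realType) (U : set (set nat)) (n : nat)
  (a : nat -> ('I_n -> nat) -> R[i]) (d : nat -> nat) :
  nonprincipal_ultrafilter U ->
  hinfinite U d ->
  abs_infinitesimal U a d <->
  (hinfinitesimal U (fun k => a k (fun _ => 0%N)) /\
   forall nu : nat -> 'I_n -> nat,
     ~ ae U (fun k => nu k = (fun _ => 0%N)) ->
     ae U (fun k => (mdeg (nu k) <= d k)%N) ->
     hinfinitesimal U
       (fun k => ((Normc.normc (a k (nu k))) `^ (1 / (mdeg (nu k))%:R))%:C)).
Proof.
move=> hU _; split.
- move=> Pinf; split; first exact: (abs_infinitesimal_const_coef hU Pinf).
  by move=> nu; exact: (abs_infinitesimal_coef_root hU Pinf).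
- case=> a0 roots; apply: (abs_infinitesimal_of_coef hU a0).
  exact: (coef_radius_infinitesimal hU).
Qed.
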